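(* Let $k$ be a ring and let $G$ be a group. Then for every integer $n\ge1$ there is a canonical ring isomorphism $D^1(M_n(k)[G])\simeq M_n(D^1(k[G]))$.
   Context: For a ring $R$ and group $G$, $R[G]$ is the group ring and $(R[G])[G]$ the set of finitely supported maps $\beta\colon G\to R[G]$. $D^1(R[G])=R[G]\times(R[G])[G]$ with componentwise addition and multiplication $(\alpha_1,\beta_1)*(\alpha_2,\beta_2)=(\alpha_1\alpha_2,\alpha_1\beta_2+\beta_1\alpha_2+\beta_1\beta_2)$, where $\alpha_1\alpha_2$ is the group ring product and $(\alpha\beta)(g)(h)=\sum_{t\in G}\alpha(t)\beta(gt)(t^{-1}h)$, $(\beta\alpha)(g)(h)=\sum_t\beta(g)(t)\alpha(t^{-1}h)$, $(\beta\gamma)(g)(h)=\sum_t\beta(g)(t)\gamma(gt)(t^{-1}h)$. $M_n(\cdot)$ denotes $n\times n$ matrices. *)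

From HB Require Import structures.
From mathcomp Require Import all_boot all_order all_algebra.
From mathcomp Require Import monoid.
From mathcomp Require Import boolp classical_sets cardinality fsbigop.

Set Implicit Arguments.
Unset Strict Implicit.
Unset Printing Implicit Defensive.

Import GRing.Theory.
Local Open Scope ring_scope.
Local Open Scope classical_set_scope.

(* G is an arbitrary (possibly infinite) group: mathcomp's [groupType]      *)
(* Elements of R[G] are functions G -> R with finite support; elements of   *)
(* (R[G])[G] are finitely supported maps G -> R[G], represented as curried  *)
(* functions G -> G -> R.                                                   *)

Section GroupRing.
Variables (R : pzRingType) (G : groupType).

Local Notation gmul := (@monoid.mul G).
Local Notation ginv := (@monoid.inv G).
Local Notation gone := (@monoid.one G).

Definition gr_fin (a : G -> R) : Prop := finite_set [set g | a g != 0].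

Definition gr_add (a b : G -> R) : G -> R := fun g => a g + b g.
Definition gr_zero : G -> R := fun _ => 0.
Definition gr_one : G -> R := fun g => if g == gone then 1 else 0.
Definition gr_mul (a b : G -> R) : G -> R :=
  fun h => \sum_(t \in @setT G) a t * b (gmul (ginv t) h).

Definition D1 := ((G -> R) * (G -> G -> R))%type.

Definition grg_fin (b : G -> G -> R) : Prop :=
  finite_set [set g | b g <> gr_zero] /\ (forall g, gr_fin (b g)).

Definition D1_fin (x : D1) : Prop := gr_fin x.1 /\ grg_fin x.2.

Definition grg_add (b c : G -> G -> R) : G -> G -> R :=
  fun g h => b g h + c g h.

Definition D1_lmul (a : G -> R) (b : G -> G -> R) : G -> G -> R :=
  fun g h => \sum_(t \in @setT G) a t * b (gmul g t) (gmul (ginv t) h).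
Definition D1_rmul (b : G -> G -> R) (a : G -> R) : G -> G -> R :=
  fun g h => \sum_(t \in @setT G) b g t * a (gmul (ginv t) h).
Definition D1_bmul (b c : G -> G -> R) : G -> G -> R :=
  fun g h => \sum_(t \in @setT G) b g t * c (gmul g t) (gmul (ginv t) h).

Definition D1_add (x y : D1) : D1 := (gr_add x.1 y.1, grg_add x.2 y.2).
Definition D1_zero : D1 := (gr_zero, fun _ _ => 0).
Definition D1_one : D1 := (gr_one, fun _ _ => 0).
Definition D1_mul (x y : D1) : D1 :=
  (gr_mul x.1 y.1,
   grg_add (grg_add (D1_lmul x.1 y.2) (D1_rmul x.2 y.1)) (D1_bmul x.2 y.2)).

End GroupRing.

Section MatrixOps.
Variables (T : Type) (add mul : T -> T -> T) (zero one : T) (n : nat).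

Definition mxo_add (A B : 'M[T]_n) : 'M[T]_n :=
  \matrix_(i, j) add (A i j) (B i j).
Definition mxo_mul (A B : 'M[T]_n) : 'M[T]_n :=
  \matrix_(i, j) \big[add/zero]_(l < n) mul (A i l) (B l j).
Definition mxo_one : 'M[T]_n :=
  \matrix_(i, j) if i == j then one else zero.
Definition mxo_fin (P : T -> Prop) (A : 'M[T]_n) : Prop := forall i j, P (A i j).

End MatrixOps.

Definition ring_iso_on {A B : Type} (PA : A -> Prop) (addA mulA : A -> A -> A)
    (oneA : A) (PB : B -> Prop) (addB mulB : B -> B -> B) (oneB : B)
    (f : A -> B) : Prop :=
  (forall x, PA x -> PB (f x)) /\
  (forall x y, PA x -> PA y -> f x = f y -> x = y) /\
  (forall y, PB y -> exists2 x, PA x & f x = y) /\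
  (forall x y, PA x -> PA y -> f (addA x y) = addB (f x) (f y)) /\
  (forall x y, PA x -> PA y -> f (mulA x y) = mulB (f x) (f y)) /\
  f oneA = oneB.

Definition D1_to_mx (k : pzRingType) (G : groupType) (n : nat)
    (x : D1 'M[k]_n G) : 'M[D1 k G]_n :=
  \matrix_(i, j) ((fun g => x.1 g i j), (fun g h => x.2 g h i j)).

From HB Require Import structures.
From mathcomp Require Import all_boot all_order all_algebra.
From mathcomp Require Import monoid.
From mathcomp Require Import finmap boolp classical_sets cardinality fsbigop.

(* The map [D1_to_mx] merely reads the entries of the matrix coefficients of
   (alpha, beta), so it is a bijection between finitely supported elements and
   it commutes with the pointwise sum and unit. For the product, each of the
   four convolutions defining [D1_mul] is a finite sum over [t] (the left
   factor has finite support), and the (i, j) entry of a finite sum of matrix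
   products [\sum_t A t * B t] is [\sum_l \sum_t A t i l * B t l j]: this
   exchange of two finite sums is exactly the matrix product in
   M_n(D^1(k[G])). *)

Set Implicit Arguments.
Unset Strict Implicit.
Unset Printing Implicit Defensive.
Import GRing.Theory.
Local Open Scope ring_scope.
Local Open Scope classical_set_scope.

Lemma fsbigT_finite_support (T : choiceType) (V : nmodType) (F : T -> V)
    (S : set T) :
  finite_set S -> (forall t, F t != 0 -> S t) ->
  \sum_(t \in [set: T]) F t = \sum_(t <- fset_set S) F t.
Proof.
move=> finS suppF; apply: fsbigTE => t; rewrite in_fset_set // => tNS.
by apply/eqP; apply: contraNT tNS => /suppF St; rewrite inE.
Qed.

Lemma fsum_mul_mxE (T : choiceType) (k : pzRingType) (n : nat)
    (A B : T -> 'M[k]_n) (i j : 'I_n) :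
  finite_set [set t | A t != 0] ->
  (\sum_(t \in [set: T]) A t * B t) i j
  = \sum_(l < n) \sum_(t \in [set: T]) A t i l * B t l j.
Proof.
move=> finA; rewrite (fsbigT_finite_support finA); last first.
  by move=> t; apply: contraNneq => ->; rewrite mul0r.
rewrite summxE; under eq_bigr do rewrite -mulmxE mxE.
rewrite exchange_big; apply: eq_bigr => l _.
rewrite (fsbigT_finite_support finA) // => t.
by apply: contraNneq => ->; rewrite mxE mul0r.
Qed.

Lemma finite_set_exists_ord (T : Type) (m p : nat) (P : 'I_m -> 'I_p -> set T) :
  (forall i j, finite_set (P i j)) -> finite_set [set x | exists i j, P i j x].
Proof.
move=> finP; apply: (@sub_finite_set _ _
  (\bigcup_(ij in [set: 'I_m * 'I_p]) P ij.1 ij.2)).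
  by move=> x [i [j Pijx]]; exists (i, j).
by apply: bigcup_finite; [exact: finite_finset | move=> [i j] _; exact: finP].
Qed.

Lemma mx_neq0_entry (R : nmodType) (m p : nat) (A : 'M[R]_(m, p)) :
  A != 0 -> exists i j, A i j != 0.
Proof.
apply: contraNP => noentry; apply/eqP/matrixP => i j; rewrite mxE.
by apply/eqP/negPn/negP => Aij; apply: noentry; exists i, j.
Qed.

Lemma finite_support_mx (T : Type) (R : nmodType) (m p : nat)
    (F : T -> 'I_m -> 'I_p -> R) :
  (forall i j, finite_set [set x | F x i j != 0]) ->
  finite_set [set x | \matrix_(i, j) F x i j != 0].
Proof.
move=> finF; apply: sub_finite_set (finite_set_exists_ord finF) => x.
by move=> /mx_neq0_entry [i [j]]; rewrite mxE; exists i, j.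
Qed.

Section D1Sums.
Variables (R : pzRingType) (G : groupType) (n : nat) (F : 'I_n -> D1 R G).

Lemma D1_sum_fst g :
  (\big[@D1_add R G/D1_zero R G]_(l < n) F l).1 g = \sum_(l < n) (F l).1 g.
Proof. by apply: (big_rec2 (fun x y => x.1 g = y)) => // l x y _ <-. Qed.

Lemma D1_sum_snd g h :
  (\big[@D1_add R G/D1_zero R G]_(l < n) F l).2 g h = \sum_(l < n) (F l).2 g h.
Proof. by apply: (big_rec2 (fun x y => x.2 g h = y)) => // l x y _ <-. Qed.

End D1Sums.

Section D1Matrix.
Variables (k : pzRingType) (G : groupType) (n : nat).
Local Notation M := 'M[k]_n.

Definition mx_to_D1 (Y : 'M[D1 k G]_n) : D1 M G :=
  (fun g => \matrix_(i, j) (Y i j).1 g,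
   fun g h => \matrix_(i, j) (Y i j).2 g h).

Lemma mx_to_D1K : cancel mx_to_D1 (@D1_to_mx k G n).
Proof.
move=> Y; apply/matrixP => i j; rewrite mxE [RHS]surjective_pairing.
by congr pair; apply/funext => g; [|apply/funext => h]; rewrite mxE.
Qed.

Lemma D1_to_mx_inj : injective (@D1_to_mx k G n).
Proof.
move=> [a b] [c d] eq_mx.
have eq_entry i j := congr1 (fun A : 'M[D1 k G]_n => A i j) eq_mx.
congr pair; apply/funext => g; [|apply/funext => h]; apply/matrixP => i j;
  move: (eq_entry i j); rewrite !mxE => -[eq1 eq2].
  exact: (congr1 (fun f => f g) eq1).
exact: (congr1 (fun f => f g h) eq2).
Qed.

Lemma D1_to_mx_fin (x : D1 M G) :
  D1_fin x -> mxo_fin (@D1_fin k G) (D1_to_mx x).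
Proof.
case: x => a b [/= fina [finb finbg]] i j; rewrite mxE; split => /=.
  by apply: sub_finite_set fina => g /=; apply: contraNneq => ->; rewrite mxE.
split; last first.
  move=> g; apply: sub_finite_set (finbg g) => h /=.
  by apply: contraNneq => ->; rewrite mxE.
apply: sub_finite_set finb => g /= bgij_neq0 bg0; apply: bgij_neq0.
by apply/funext => h; rewrite bg0 mxE.
Qed.

Lemma mx_to_D1_fin (Y : 'M[D1 k G]_n) :
  mxo_fin (@D1_fin k G) Y -> D1_fin (mx_to_D1 Y).
Proof.
move=> finY; split => /=.
  by apply: finite_support_mx => i j; case: (finY i j).
split=> [|g]; last first.
  by apply: finite_support_mx => i j; case: (finY i j) => _ [_]; apply.
apply: sub_finite_set
  (finite_set_exists_ord (fun i j => (proj1 (proj2 (finY i j))))) => g /=.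
apply: contra_notP => noentry; apply/funext => h; apply/matrixP => i j.
rewrite !mxE; suff -> : (Y i j).2 g = @gr_zero k G by [].
by apply: contra_notP noentry => Yij; exists i, j.
Qed.

Lemma D1_to_mxD (x y : D1 M G) :
  D1_to_mx (D1_add x y) = mxo_add (@D1_add k G) (D1_to_mx x) (D1_to_mx y).
Proof.
apply/matrixP => i j; rewrite !mxE.
by congr pair; apply/funext => g; [|apply/funext => h]; rewrite mxE.
Qed.

Lemma D1_to_mx1 : D1_to_mx (D1_one M G) = mxo_one (D1_zero k G) (D1_one k G) n.
Proof.
apply/matrixP => i j; rewrite /mxo_one !mxE /D1_one /D1_zero /gr_one /gr_zero.
have [<-|/negPf neq_ij] := eqVneq i j; rewrite /=; congr pair;
  apply/funext => g; do ?[apply/funext => h]; rewrite ?mxE //;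
  by case: (g == 1%g); rewrite ?mxE ?eqxx ?neq_ij.
Qed.

Lemma D1_to_mxM (x y : D1 M G) : D1_fin x ->
  D1_to_mx (D1_mul x y) =
  mxo_mul (@D1_add k G) (@D1_mul k G) (D1_zero k G) (D1_to_mx x) (D1_to_mx y).
Proof.
case: x y => a b [c d] [/= fina [_ finbg]].
apply/matrixP => i j; rewrite !mxE [RHS]surjective_pairing; congr pair.
  apply/funext => g /=; rewrite D1_sum_fst.
  under eq_bigr do rewrite !mxE /=.
  by rewrite /gr_mul fsum_mul_mxE.
apply/funext => g; apply/funext => h /=; rewrite D1_sum_snd.
under eq_bigr do rewrite !mxE /=.
rewrite /grg_add !big_split /= !mxE /D1_lmul /D1_rmul /D1_bmul.
by rewrite !fsum_mul_mxE //; exact: finbg.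
Qed.

End D1Matrix.

Theorem proposition7p1 (k : pzRingType) (G : groupType) (n : nat) :
  (1 <= n)%N ->
  ring_iso_on
    (@D1_fin 'M[k]_n G) (@D1_add 'M[k]_n G) (@D1_mul 'M[k]_n G)
    (@D1_one 'M[k]_n G)
    (mxo_fin (@D1_fin k G))
    (@mxo_add (D1 k G) (@D1_add k G) n)
    (@mxo_mul (D1 k G) (@D1_add k G) (@D1_mul k G) (@D1_zero k G) n)
    (@mxo_one (D1 k G) (@D1_zero k G) (@D1_one k G) n)
    (@D1_to_mx k G n).
Proof.
move=> _; split; first exact: D1_to_mx_fin.
split; first by move=> x y _ _ /D1_to_mx_inj.
split; first by move=> Y finY; exists (mx_to_D1 Y);
  [exact: mx_to_D1_fin | exact: mx_to_D1K].
split; first by move=> x y _ _; exact: D1_to_mxD.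
split; first by move=> x y finx _; exact: D1_to_mxM.
exact: D1_to_mx1.
Qed.
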